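(* Let $q$ be a prime power and $\mathcal{C}_2 \subsetneqq \mathcal{C}_1 \subseteq \mathbb{F}_q^{m \times n}$ be $\mathbb{F}_q$-linear codes, $\ell = \dim \mathcal{C}_1 - \dim \mathcal{C}_2$. Fix a subspace $\mathcal{W}$ with $\mathcal{C}_1 = \mathcal{C}_2 \oplus \mathcal{W}$ and an isomorphism $\psi : \mathbb{F}_q^\ell \to \mathcal{W}$; let $\mathbf{x}$ be uniform on $\mathbb{F}_q^\ell$ and $C = \psi(\mathbf{x}) + D$ with $D$ uniform on $\mathcal{C}_2$ independent of $\mathbf{x}$. Let $B \in \mathbb{F}_q^{\mu \times n}$ and $\mathcal{L} = {\rm Row}(B)$. Then, with mutual information computed with logarithms to base $q$, $$I(\mathbf{x}; CB^T) = \dim(\mathcal{C}_2^\perp \cap \mathcal{V}_\mathcal{L}) - \dim(\mathcal{C}_1^\perp \cap \mathcal{V}_\mathcal{L}).$$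
   Context: ${\rm Row}(B)$ is the row space of $B$. For a subspace $\mathcal{L} \subseteq \mathbb{F}_q^n$, $\mathcal{V}_\mathcal{L} = \{V \in \mathbb{F}_q^{m\times n} \mid {\rm Row}(V) \subseteq \mathcal{L}\}$. The dual of a linear code $\mathcal{C} \subseteq \mathbb{F}_q^{m \times n}$ is $\mathcal{C}^\perp = \{D \in \mathbb{F}_q^{m\times n} \mid {\rm Trace}(CD^T) = 0 \ \forall C \in \mathcal{C}\}$. *)

From HB Require Import structures.
From mathcomp Require Import all_boot all_order all_algebra.
From mathcomp Require Import reals exp.
Set Implicit Arguments. Unset Strict Implicit. Unset Printing Implicit Defensive.
Import Order.TTheory GRing.Theory Num.Theory.
Local Open Scope ring_scope.

Section Defs.
Variable F : finFieldType.
Variables m n mu : nat.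

Definition dual_code (C : {vspace 'M[F]_(m, n)}) : {set 'M[F]_(m, n)} :=
  [set D | [forall c : 'M[F]_(m, n), (c \in C) ==> (\tr (c *m D^T) == 0)]].

Definition VL (B : 'M[F]_(mu, n)) : {set 'M[F]_(m, n)} :=
  [set V | (V <= B)%MS].

Definition dim_set (S : {set 'M[F]_(m, n)}) : nat := \dim (<< enum S >>%VS).
End Defs.

Definition mutual_info (R : realType) (X Y : finType) (b : R) (p : X -> Y -> R) : R :=
  let px := fun x => \sum_(y : Y) p x y in
  let py := fun y => \sum_(x : X) p x y in
  \sum_(x : X) \sum_(y : Y)
     (if p x y == 0 then 0 else p x y * (ln (p x y / (px x * py y)) / ln b)).

(* Joint law of (x, C B^T), where x is uniform on F^l, D uniform on C2,
   independent of x, and C = psi x + D. *)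
Definition joint_xCB (R : realType) (F : finFieldType) (m n mu l : nat)
  (C2 : {vspace 'M[F]_(m, n)}) (psi : 'rV[F]_l -> 'M[F]_(m, n)) (B : 'M[F]_(mu, n))
  (x : 'rV[F]_l) (y : 'M[F]_(m, mu)) : R :=
  \sum_(x' : 'rV[F]_l) \sum_(d : 'M[F]_(m, n) | d \in C2)
     ((#|F|%:R ^+ l)^-1 * (#|[set d' : 'M[F]_(m, n) | d' \in C2]|%:R)^-1 *
      (if (x' == x) && ((psi x' + d) *m B^T == y) then 1 else 0)).

From HB Require Import structures.
From mathcomp Require Import all_boot all_order all_algebra finfield.
From mathcomp Require Import reals exp.
From mathcomp Require Import zify lra.
Set Implicit Arguments. Unset Strict Implicit. Unset Printing Implicit Defensive.
Import Order.TTheory GRing.Theory Num.Theory.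
Local Open Scope ring_scope.

(* Write f C := C B^T.  The observation is f (psi x) + f D, and f D is uniform on
   f C2, all fibres of f on C2 having the same size; so the joint law of (x, f C) is
   constant on its support, and I(x; f C) = l - dim K with K = {x | f (psi x) \in f C2}.
   Rank-nullity turns l - dim K into dim f C1 - dim f C2.  On the dual side,
   C^perp :&: V_L is the image under A |-> A B of the annihilator of f C for the trace
   pairing on F^(m x mu), which has dimension m mu - dim f C - dim ker (A |-> A B). *)

Section TracePairing.
Variables (F : fieldType) (m p : nat).
Local Notation M := 'M[F]_(m, p).

Definition tr_pair (X A : M) : F := \tr (X *m A^T).

Lemma tr_pairDl a X Y A : tr_pair (a *: X + Y) A = a * tr_pair X A + tr_pair Y A.
Proof. by rewrite /tr_pair mulmxDl -scalemxAl mxtraceD mxtraceZ. Qed.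

Lemma tr_pairDr a X Y A : tr_pair A (a *: X + Y) = a * tr_pair A X + tr_pair A Y.
Proof. by rewrite /tr_pair linearD linearZ /= mulmxDr -scalemxAr mxtraceD mxtraceZ. Qed.

Lemma tr_pair_suml I (r : seq I) (P : pred I) (G : I -> M) A :
  tr_pair (\sum_(i <- r | P i) G i) A = \sum_(i <- r | P i) tr_pair (G i) A.
Proof.
elim/big_rec2: _ => [|i y1 y2 _ <-]; first by rewrite /tr_pair mul0mx mxtrace0.
by rewrite /tr_pair mulmxDl mxtraceD.
Qed.

Lemma tr_pair_delta i j A : tr_pair (delta_mx i j) A = A i j.
Proof.
rewrite /tr_pair /mxtrace (bigD1 i) //= big1 ?addr0 => [|k ki].
  rewrite mxE (bigD1 j) //= big1 ?addr0 => [|l lj]; first by rewrite !mxE !eqxx mul1r.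
  by rewrite !mxE (negbTE lj) andbF mul0r.
by rewrite mxE big1 // => l _; rewrite !mxE (negbTE ki) mul0r.
Qed.

Lemma tr_pair_nondeg A : (forall X, tr_pair X A = 0) -> A = 0.
Proof. by move=> A0; apply/matrixP => i j; rewrite -tr_pair_delta A0 mxE. Qed.

Definition tr_pair_vbasis (U : {vspace M}) (A : M) : 'rV[F]_(\dim U) :=
  \row_i tr_pair (vbasis U)`_i A.

Lemma tr_pair_vbasis_linear U : linear (tr_pair_vbasis U).
Proof. by move=> a X Y; apply/rowP => i; rewrite !mxE tr_pairDr. Qed.

HB.instance Definition _ U :=
  GRing.isLinear.Build F M 'rV[F]_(\dim U) *:%R (tr_pair_vbasis U) (tr_pair_vbasis_linear U).

Definition ann (U : {vspace M}) : {vspace M} := lker (linfun (tr_pair_vbasis U)).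

Lemma annP (U : {vspace M}) A :
  reflect (forall X, X \in U -> tr_pair X A = 0) (A \in ann U).
Proof.
rewrite memv_ker lfunE; apply: (iffP eqP) => [UA0 X /coord_vbasis -> | UA0].
  rewrite tr_pair_suml big1 // => i _; rewrite -[_ *: _]addr0 tr_pairDl.
  have := congr1 (fun Z : 'rV_(\dim U) => Z 0 i) UA0; rewrite !mxE => ->.
  by rewrite /tr_pair mul0mx mxtrace0 mulr0 addr0.
by apply/rowP => i; rewrite !mxE UA0 // vbasis_mem ?memt_nth.
Qed.

Lemma annS (U V : {vspace M}) : (U <= V)%VS -> (ann V <= ann U)%VS.
Proof.
move=> UV; apply/subvP => A /annP VA0; apply/annP => X XU.
by apply: VA0; apply: (subvP UV).
Qed.

Lemma ann_cap (U V : {vspace M}) : (ann U :&: ann V = ann (U + V))%VS.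
Proof.
apply/eqP; rewrite eqEsubv subv_cap !annS ?addvSl ?addvSr // !andbT.
apply/subvP => A /memv_capP [/annP UA0 /annP VA0]; apply/annP => _ /memv_addP [u uU [v vV ->]].
by rewrite -[u]scale1r tr_pairDl UA0 // VA0 // mulr0 addr0.
Qed.

Lemma ann_fullv : ann fullv = 0%VS.
Proof.
apply/eqP; rewrite -subv0; apply/subvP => A /annP fA0.
by rewrite memv0; apply/eqP/tr_pair_nondeg => X; apply: fA0; rewrite memvf.
Qed.

Lemma dim_mx_fullv : \dim {:M} = (m * p)%N.
Proof. by rewrite dimvf dim_matrix. Qed.

Lemma dim_ann_ge (U : {vspace M}) : (m * p <= \dim (ann U) + \dim U)%N.
Proof.
have := limg_ker_dim (linfun (tr_pair_vbasis U)) fullv.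
rewrite capfv dim_mx_fullv => <-; rewrite leq_add2l.
by have := dimvS (subvf (limg (linfun (tr_pair_vbasis U)))); rewrite dimvf dim_matrix mul1r.
Qed.

Lemma dim_ann (U : {vspace M}) : (\dim (ann U) + \dim U = m * p)%N.
Proof.
have := dimv_sum_cap (ann U) (ann U^C).
rewrite ann_cap addv_complf ann_fullv dimv0 addn0.
have := dimvS (subvf (ann U + ann U^C)); have := dimvS (subvf U).
move: (dim_ann_ge U) (dim_ann_ge U^C); rewrite dimv_compl dim_mx_fullv; lia.
Qed.

End TracePairing.

Lemma dim_lpreim_img (K : fieldType) (aT vT wT : vectType K)
    (psi : 'Hom(aT, vT)) (f : 'Hom(vT, wT)) (C : {vspace vT}) :
  (\dim ((f \o psi) @^-1: (f @: C)) + \dim (f @: (C + limg psi))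
    = \dim {:aT} + \dim (f @: C))%N.
Proof.
set g := (f \o psi)%VF; set I := (f @: C)%VS; set P := (g @^-1: I)%VS.
have imgD : (f @: (C + limg psi) = I + limg g)%VS by rewrite limgD limg_comp.
have imgP : (g @: P = I :&: limg g)%VS.
  by rewrite /P -lpreim_cap_limg lpreimK // capvSr.
have kerP : (lker g <= P)%VS by rewrite -lpreim0 lpreimS ?sub0v.
have := limg_ker_dim g P; rewrite (capv_idPr kerP) imgP.
have := limg_ker_dim g fullv; rewrite capfv.
have := dimv_sum_cap I (limg g); rewrite imgD; lia.
Qed.

Section DualCodeView.
Variables (F : finFieldType) (m n mu : nat) (B : 'M[F]_(mu, n)).

Definition mulBT : 'Hom('M[F]_(m, n), 'M[F]_(m, mu)) := linfun (mulmxr B^T).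
Definition mulB : 'Hom('M[F]_(m, mu), 'M[F]_(m, n)) := linfun (mulmxr B).

Lemma mulBTE c : mulBT c = c *m B^T. Proof. by rewrite lfunE. Qed.
Lemma mulBE c : mulB c = c *m B. Proof. by rewrite lfunE. Qed.

Lemma dual_code_VLE (C : {vspace 'M[F]_(m, n)}) :
  dual_code C :&: VL m B =i (mulB @: ann (mulBT @: C))%VS.
Proof.
move=> V; rewrite !inE; apply/andP/idP.
  case=> /forallP CV0 /submxP [A defV]; apply/memv_imgP; exists A; last by rewrite mulBE.
  apply/annP => Y /memv_imgP [c cC ->]; rewrite mulBTE /tr_pair.
  by have := CV0 c; rewrite cC defV trmx_mul mulmxA => /eqP.
case/memv_imgP => A /annP CA0 ->; rewrite mulBE; split; last exact: submxMl.
apply/forallP => c; apply/implyP => cC; rewrite trmx_mul mulmxA; apply/eqP.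
by rewrite -mulBTE; apply: CA0; apply: memv_img.
Qed.

Lemma dim_set_vspace (S : {set 'M[F]_(m, n)}) (U : {vspace 'M[F]_(m, n)}) :
  S =i U -> dim_set S = \dim U.
Proof.
move=> SU; rewrite /dim_set; congr (\dim _); apply/eqP; rewrite eqEsubv.
apply/andP; split; first by apply/span_subvP => v; rewrite mem_enum SU.
by apply/subvP => v vU; apply: memv_span; rewrite mem_enum SU.
Qed.

Lemma dim_dual_code_VL (C : {vspace 'M[F]_(m, n)}) :
  (dim_set (dual_code C :&: VL m B) + \dim (mulBT @: C) + \dim (lker mulB) = m * mu)%N.
Proof.
rewrite (dim_set_vspace (dual_code_VLE C)).
have kerS : (lker mulB <= ann (mulBT @: C))%VS.
  apply/subvP => A; rewrite memv_ker mulBE => /eqP AB0.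
  apply/annP => Y /memv_imgP [c _ ->].
  by rewrite mulBTE /tr_pair -mulmxA -trmx_mul AB0 trmx0 mulmx0 mxtrace0.
have := limg_ker_dim mulB (ann (mulBT @: C)); rewrite (capv_idPr kerS).
by rewrite -(dim_ann (mulBT @: C)) => <-; rewrite [LHS]addnC addnA.
Qed.

End DualCodeView.

Section JointLaw.
Variables (R : realType) (F : finFieldType) (m n mu l : nat).
Variables (C2 : {vspace 'M[F]_(m, n)}) (psi : {linear 'rV[F]_l -> 'M[F]_(m, n)}).
Variable B : 'M[F]_(mu, n).

Local Notation p := (joint_xCB R C2 psi B).
Local Notation q := (#|F|%:R : R).
Let c0 : R := (q ^+ l)^-1 * (#|[set d : 'M[F]_(m, n) | d \in C2]|%:R)^-1.
Let I2 := (mulBT m B @: C2)%VS.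
Let K := ((mulBT m B \o linfun psi) @^-1: I2)%VS.

Definition fibre_size (z : 'M[F]_(m, mu)) : nat :=
  #|[set d : 'M[F]_(m, n) | (d \in C2) && (d *m B^T == z)]|.

Lemma joint_xCBE x y : p x y = c0 * (fibre_size (y - psi x *m B^T))%:R.
Proof.
rewrite /joint_xCB (bigD1 x) // [X in _ + X = _]big1 ?addr0; last first.
  by move=> x' /negbTE x'x; apply: big1 => d _; rewrite x'x mulr0.
rewrite -mulr_sumr eqxx -big_mkcondr; congr (_ * _).
rewrite /fibre_size -sumr_const; apply: eq_bigl => d.
by rewrite inE mulmxDl addrC eq_sym -subr_eq eq_sym.
Qed.

Lemma sum_fibre_size : (\sum_z fibre_size z = #|[set d : 'M[F]_(m, n) | d \in C2]|)%N.
Proof.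
rewrite -sum1dep_card (partition_big (fun d => d *m B^T) xpredT) //=.
by apply: eq_bigr => z _; rewrite sum1dep_card.
Qed.

Lemma fibre_size_img z : z \in I2 -> fibre_size z = fibre_size 0.
Proof.
case/memv_imgP => d0 d0C ->; rewrite mulBTE /fibre_size.
rewrite -[RHS](card_imset _ (addIr d0)); apply: eq_card => d; rewrite inE.
apply/andP/imsetP => [[dC /eqP dB]|[d' + ->]].
  exists (d - d0); last by rewrite subrK.
  by rewrite inE rpredB //= mulmxBl dB subrr eqxx.
by rewrite inE => /andP [d'C /eqP d'B]; rewrite rpredD // mulmxDl d'B add0r.
Qed.

Lemma fibre_size_notin z : z \notin I2 -> fibre_size z = 0%N.
Proof.
move=> zI; apply/eqP; rewrite cards_eq0; apply/eqP/setP => d; rewrite !inE.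
by apply: contraNF zI => /andP [dC /eqP <-]; rewrite -mulBTE memv_img.
Qed.

Lemma marginal_x x : \sum_y p x y = (q ^+ l)^-1.
Proof.
under eq_bigr => y _ do rewrite joint_xCBE.
rewrite -mulr_sumr -natr_sum (reindex_inj (addIr (psi x *m B^T))) /=.
under eq_bigr => z _ do rewrite addrK.
rewrite sum_fibre_size /c0 -mulrA mulVf ?mulr1 // pnatr_eq0 -lt0n.
by apply/card_gt0P; exists 0; rewrite inE mem0v.
Qed.

Lemma joint_xCB_support x y : p x y != 0 -> y - psi x *m B^T \in I2.
Proof.
by apply: contraR => yI; rewrite joint_xCBE fibre_size_notin // mulr0.
Qed.

Lemma joint_xCB_const x y : p x y != 0 -> p x y = c0 * (fibre_size 0)%:R.
Proof. by move=> pxy; rewrite joint_xCBE fibre_size_img // joint_xCB_support. Qed.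

Lemma marginal_y x y :
  p x y != 0 -> \sum_x' p x' y = c0 * (fibre_size 0)%:R * #|K|%:R.
Proof.
move=> /joint_xCB_support yI.
have px'y x' : p x' y = c0 * (if x - x' \in K then fibre_size 0 else 0%N)%:R.
  rewrite joint_xCBE /K -memv_preim comp_lfunE mulBTE lfunE /=.
  have -> : y - psi x' *m B^T = (y - psi x *m B^T) + psi (x - x') *m B^T.
    by rewrite linearB mulmxBl addrA subrK.
  case: ifP => [|/negbT] xx'K; first by rewrite fibre_size_img // rpredD.
  by rewrite fibre_size_notin // (rpredDl _ yI).
under eq_bigr => x' _ do rewrite px'y.
rewrite (reindex_inj (subrI x)) /=.
under eq_bigr => z _ do rewrite opprB addrC subrK (fun_if (fun k => c0 * k%:R)) mulr0.
by rewrite -big_mkcond /= sumr_const [RHS]mulr_natr.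
Qed.

Lemma mutual_info_joint_xCB : mutual_info q p = l%:R - (\dim K)%:R.
Proof.
have q_gt1 : 1 < q by rewrite ltr1n card_finNzRing_gt1.
have q_gt0 : 0 < q by apply: lt_trans q_gt1.
have lnq_neq0 : ln q != 0 by rewrite gt_eqF // ln_gt0.
rewrite /mutual_info /=.
have term x y : (if p x y == 0 then 0 else p x y * (ln (p x y /
    ((\sum_y0 p x y0) * (\sum_x0 p x0 y))) / ln q)) = p x y * (l%:R - (\dim K)%:R).
  have [->|pxy] := eqVneq (p x y) 0; first by rewrite mul0r.
  (* on the support, p x y / (p_x p_y) = q ^+ l / #|K| and #|K| = q ^+ \dim K *)
  congr (_ * _); rewrite marginal_x (marginal_y pxy) (joint_xCB_const pxy).
  have pxy0 : c0 * (fibre_size 0)%:R != 0 by rewrite -(joint_xCB_const pxy).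
  rewrite card_vspace natrX invfM invrK invfM mulrCA mulrA -mulrA mulVKf //.
  rewrite ln_div ?posrE ?exprn_gt0 // !lnXn //.
  by rewrite -[ln q *+ l]mulr_natr -[ln q *+ _]mulr_natr -mulrBr mulrC mulrA mulVf ?mul1r.
under eq_bigr => x _ do under eq_bigr => y _ do rewrite term.
under eq_bigr => x _ do rewrite -mulr_suml marginal_x.
rewrite sumr_const card_mx mul1n -mulrnAl -[_ *+ (_ ^ l)]mulr_natr natrX.
by rewrite mulVf ?mul1r // expf_neq0 // gt_eqF.
Qed.

End JointLaw.

Theorem proposition4 (R : realType) (F : finFieldType) (m n mu l : nat)
  (C1 C2 W : {vspace 'M[F]_(m, n)})
  (psi : {linear 'rV[F]_l -> 'M[F]_(m, n)}) (B : 'M[F]_(mu, n)) :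
  (C2 <= C1)%VS -> C2 != C1 ->
  l = (\dim C1 - \dim C2)%N ->
  (C2 + W)%VS = C1 -> directv (C2 + W) ->
  injective psi -> (forall x, psi x \in W) ->
  (forall w, w \in W -> exists x, psi x = w) ->
  mutual_info (#|F|%:R : R) (joint_xCB R C2 psi B) =
    (dim_set (dual_code C2 :&: VL m B))%:R - (dim_set (dual_code C1 :&: VL m B))%:R.
Proof.
(* Only [C2 + W = C1] and [psi] being onto [W] matter. *)
move=> _ _ _ defC1 _ _ psiW psi_onto.
have imgW : limg (linfun psi) = W.
  apply/vspaceP => w; apply/memv_imgP/idP => [[x _ ->]|/psi_onto [x <-]].
    by rewrite lfunE; apply: psiW.
  by exists x; rewrite ?memvf ?lfunE.
have natR (a b : nat) : a = b -> a%:R = b%:R :> R by move->.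
have := natR _ _ (dim_lpreim_img (linfun psi) (mulBT m B) C2).
have := natR _ _ (dim_dual_code_VL B C1); have := natR _ _ (dim_dual_code_VL B C2).
rewrite mutual_info_joint_xCB imgW defC1 dimvf dim_matrix mul1r !natrD; lra.
Qed.
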